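(* Let $I\subset\mathbb{R}$ be an interval and let $f,g:I\to\mathbb{R}$ be nowhere-vanishing $C^2$ functions, $\beta\in C^1(I,\mathbb{R})$, and $H_1,H_2:I\to\mathbb{R}$ continuous. Put $$a(t)=\frac{1}{4f}\Big(4\beta^2+2\dot\beta+2\beta\frac{\dot f}{f}-4\beta\frac{\dot g}{g}+(\ln|f|)_{tt}+g\Big(\frac1g\Big)_{tt}-(\ln|f|)_t(\ln|g|)_t\Big)$$ and $h(x,t)=a(t)x^2+H_1(t)x+H_2(t)+i\beta(t)$. Let $\epsilon,\epsilon_1\in\{1,-1\}$ with $\epsilon\, g(t)/f(t)>0$ on $I$, and let $T_1>0$, $T_2,\xi_0,\xi_1,\theta_0\in\mathbb{R}$. Choose differentiable functions on $I$ with $\dot B=2\beta$, $\dot P=\frac{g^2}{f}e^{-2B}$, $\dot{\mathcal I}=\frac{f}{g}e^{B}H_1$, $\dot J=\frac{g^2}{f}e^{-2B}\mathcal I$, $\dot L=\frac{g^2}{f}e^{-2B}\mathcal I^2$, $\dot M=H_2$, and define $$T(t)=T_1P(t)+T_2,\qquad X(x,t)=\epsilon_1\sqrt{T_1}\,\frac{g}{f}e^{-B}x-2\epsilon_1\sqrt{T_1}\,J+\xi_0T_1P+\xi_1,$$ $$R(t)=e^{-B}\Big(\epsilon T_1\frac{g}{f}\Big)^{1/2},$$ $$\theta(x,t)=\frac{1}{4f}\Big(2\beta+\frac{\dot f}{f}-\frac{\dot g}{g}\Big)x^2+\frac{g}{f}e^{-B}\Big(\mathcal I-\frac{\epsilon_1\xi_0\sqrt{T_1}}{2}\Big)x-L-\frac{\xi_0^2T_1}{4}P+\epsilon_1\xi_0\sqrt{T_1}\,J+M+\theta_0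 .$$ If $\tilde\psi(\tilde x,\tilde t)$ is a solution (continuously differentiable in $\tilde t$, twice continuously differentiable in $\tilde x$) of $$i\tilde\psi_{\tilde t}+\tilde\psi_{\tilde x\tilde x}+\epsilon|\tilde\psi|^2\tilde\psi=0$$ on a domain containing $\{(X(x,t),T(t)):x\in\mathbb{R},t\in I\}$, then $$\psi(x,t)=R(t)\,e^{i\theta(x,t)}\,\tilde\psi\big(X(x,t),T(t)\big)$$ is a solution on $\mathbb{R}\times I$ of $$i\psi_t+f(t)\psi_{xx}+g(t)|\psi|^2\psi+h(x,t)\psi=0 .$$
   Context: Here $\dot{}$ denotes $d/dt$. The functions $B,P,\mathcal I,J,L,M$ are any antiderivatives satisfying the stated differential relations (with $\mathcal I$ computed from the chosen $B$, $J,L$ from the chosen $B,\mathcal I$). *)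

From Stdlib Require Import Reals.
From Coquelicot Require Import Coquelicot.
Open Scope R_scope.

Definition cexpi (th : R) : C := (cos th, sin th).

Definition in_interval (lo hi : Rbar) (t : R) : Prop :=
  Rbar_lt lo t /\ Rbar_lt t hi.

Definition C2_on (lo hi : Rbar) (f : R -> R) : Prop :=
  forall t, in_interval lo hi t ->
    ex_derive f t /\ ex_derive (Derive f) t /\ continuous (Derive_n f 2) t.

Definition C1_on (lo hi : Rbar) (f : R -> R) : Prop :=
  forall t, in_interval lo hi t -> ex_derive f t /\ continuous (Derive f) t.

Definition C0_on (lo hi : Rbar) (f : R -> R) : Prop :=
  forall t, in_interval lo hi t -> continuous f t.

Definition has_partials (D : R -> R -> Prop) (psi pt px pxx : R -> R -> C) : Prop :=
  forall x t, D x t ->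
    is_derive (fun s => psi x s) t (pt x t) /\
    is_derive (fun y => psi y t) x (px x t) /\
    is_derive (fun y => px y t) x (pxx x t).

Definition jcont_on (D : R -> R -> Prop) (phi : R -> R -> C) : Prop :=
  forall x t, D x t -> continuous (fun p : R * R => phi (fst p) (snd p)) (x, t).

Definition coef_a (f g beta : R -> R) (t : R) : R :=
  / (4 * f t) *
  (4 * beta t ^ 2 + 2 * Derive beta t
   + 2 * beta t * (Derive f t / f t)
   - 4 * beta t * (Derive g t / g t)
   + Derive_n (fun s => ln (Rabs (f s))) 2 t
   + g t * Derive_n (fun s => / g s) 2 t
   - Derive (fun s => ln (Rabs (f s))) t * Derive (fun s => ln (Rabs (g s))) t).

Definition coef_h (f g beta H1 H2 : R -> R) (x t : R) : C :=
  (coef_a f g beta t * x ^ 2 + H1 t * x + H2 t, beta t).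

Definition trT (T1 T2 : R) (P : R -> R) (t : R) : R := T1 * P t + T2.

Definition trX (eps1 T1 xi0 xi1 : R) (f g B J P : R -> R) (x t : R) : R :=
  eps1 * sqrt T1 * (g t / f t) * exp (- B t) * x
  - 2 * eps1 * sqrt T1 * J t + xi0 * T1 * P t + xi1.

Definition trR (eps T1 : R) (f g B : R -> R) (t : R) : R :=
  exp (- B t) * sqrt (eps * T1 * (g t / f t)).

Definition trTheta (eps1 T1 xi0 theta0 : R) (f g beta B II J L M P : R -> R)
  (x t : R) : R :=
  / (4 * f t) * (2 * beta t + Derive f t / f t - Derive g t / g t) * x ^ 2
  + g t / f t * exp (- B t) * (II t - eps1 * xi0 * sqrt T1 / 2) * x
  - L t - xi0 ^ 2 * T1 / 4 * P t + eps1 * xi0 * sqrt T1 * J t + M t + theta0.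

From Stdlib Require Import Reals Lra.
From Coquelicot Require Import Coquelicot.
Open Scope R_scope.

(* Writing psi = R e^{i theta} psit(X, T), the chain rule expresses psi_t and
   psi_xx through the partials of psit, and the NLS for psit eliminates psit_t.
   The equation for psi then reduces to five pointwise identities between the
   coefficients: theta_t = -f theta_x^2 + Re h (the quadratic potential),
   X_t = -2 f theta_x X_x (transport), T' = f X_x^2 (time rescaling),
   R' = -R (f theta_xx + beta) (balance of the imaginary part), and
   g R^2 = eps f X_x^2 (matching the nonlinearity).  Each identity follows by
   differentiating the explicit formulas and using the ODEs defining
   B, P, I, J, L and M. *)

Lemma is_derive_val {V : NormedModule R_AbsRing} (F : R -> V) t l l' :
  is_derive F t l -> l = l' -> is_derive F t l'.
Proof. now intros H <-. Qed.

Lemma is_derive_Cfst (F : R -> C) t l :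
  is_derive F t l -> is_derive (fun s => fst (F s)) t (fst l).
Proof.
  intros H.
  assert (Hlin : filterdiff
            (fun y : prod_NormedModule R_AbsRing R_NormedModule R_NormedModule => fst y)
            (locally (F t)) (fun y => fst y))
    by apply filterdiff_linear, is_linear_fst.
  eapply filterdiff_ext_lin; [exact (filterdiff_comp' F _ t _ _ H Hlin)|].
  reflexivity.
Qed.

Lemma is_derive_Csnd (F : R -> C) t l :
  is_derive F t l -> is_derive (fun s => snd (F s)) t (snd l).
Proof.
  intros H.
  assert (Hlin : filterdiff
            (fun y : prod_NormedModule R_AbsRing R_NormedModule R_NormedModule => snd y)
            (locally (F t)) (fun y => snd y))
    by apply filterdiff_linear, is_linear_snd.
  eapply filterdiff_ext_lin; [exact (filterdiff_comp' F _ t _ _ H Hlin)|].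
  reflexivity.
Qed.

Lemma is_derive_Cpair (u v : R -> R) t du dv :
  is_derive u t du -> is_derive v t dv ->
  is_derive (fun s => (u s, v s) : C) t (du, dv).
Proof.
  intros Hu Hv.
  pose proof (is_derive_plus _ _ t _ _ (is_derive_scal_l u t du (1, 0) Hu)
                (is_derive_scal_l v t dv (0, 1) Hv)) as H.
  rewrite !scal_R_Cmult in H.
  eapply is_derive_ext; [|eapply is_derive_val; [exact H|]].
  - intros s. cbn. apply injective_projections; cbn; ring.
  - apply injective_projections; cbn; ring.
Qed.

Lemma is_derive_Cparts (F : R -> C) t l :
  is_derive (fun s => fst (F s)) t (fst l) ->
  is_derive (fun s => snd (F s)) t (snd l) -> is_derive F t l.
Proof.
  intros H1 H2. destruct l as [l1 l2].
  eapply is_derive_ext; [|exact (is_derive_Cpair _ _ _ _ _ H1 H2)].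
  intros s. cbn. now destruct (F s).
Qed.

Lemma is_derive_RtoC (r : R -> R) t dr :
  is_derive r t dr -> is_derive (fun s => RtoC (r s)) t (RtoC dr).
Proof. intros H. exact (is_derive_Cpair r (fun _ => 0) t dr 0 H (is_derive_const 0 t)). Qed.

Lemma is_derive_Cplus (u v : R -> C) t du dv :
  is_derive u t du -> is_derive v t dv ->
  is_derive (fun s => (u s + v s)%C) t (du + dv)%C.
Proof. exact (is_derive_plus u v t du dv). Qed.

Lemma is_derive_Cmult (u v : R -> C) t du dv :
  is_derive u t du -> is_derive v t dv ->
  is_derive (fun s => (u s * v s)%C) t (du * v t + u t * dv)%C.
Proof.
  intros Hu Hv.
  pose proof (is_derive_Cfst _ _ _ Hu) as Hu1. pose proof (is_derive_Csnd _ _ _ Hu) as Hu2.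
  pose proof (is_derive_Cfst _ _ _ Hv) as Hv1. pose proof (is_derive_Csnd _ _ _ Hv) as Hv2.
  apply is_derive_Cparts; cbn.
  - eapply is_derive_val.
    + exact (is_derive_minus _ _ _ _ _ (is_derive_mult _ _ _ _ _ Hu1 Hv1 Rmult_comm)
                                      (is_derive_mult _ _ _ _ _ Hu2 Hv2 Rmult_comm)).
    + destruct du, dv, (u t), (v t); cbn. unfold minus, plus, opp, mult; cbn. ring.
  - eapply is_derive_val.
    + exact (is_derive_plus _ _ _ _ _ (is_derive_mult _ _ _ _ _ Hu1 Hv2 Rmult_comm)
                                     (is_derive_mult _ _ _ _ _ Hu2 Hv1 Rmult_comm)).
    + destruct du, dv, (u t), (v t); cbn. unfold plus, mult; cbn. ring.
Qed.

Lemma is_derive_cexpi (th : R -> R) t d :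
  is_derive th t d ->
  is_derive (fun s => cexpi (th s)) t (cexpi (th t) * (Ci * RtoC d))%C.
Proof.
  intros H. unfold cexpi.
  eapply is_derive_val.
  - exact (is_derive_Cpair _ _ _ _ _ (is_derive_comp cos th t _ _ (is_derive_cos _) H)
                                    (is_derive_comp sin th t _ _ (is_derive_sin _) H)).
  - unfold scal; cbn; unfold mult; cbn. apply injective_projections; cbn; ring.
Qed.

Lemma is_derive_comp_RC (F : R -> C) (u : R -> R) x du dF :
  is_derive F (u x) dF -> is_derive u x du ->
  is_derive (fun y => F (u y)) x (RtoC du * dF)%C.
Proof.
  intros HF Hu. rewrite <- scal_R_Cmult. exact (is_derive_comp F u x _ _ HF Hu).
Qed.

Lemma is_derive_comp_2d (F dFx : R -> R -> R) (dFy : R) (u v : R -> R) t du dv :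
  locally (u t, v t) (fun p : R * R =>
    is_derive (fun z => F z (snd p)) (fst p) (dFx (fst p) (snd p))) ->
  is_derive (fun z => F (u t) z) (v t) dFy ->
  continuous (fun p : R * R => dFx (fst p) (snd p)) (u t, v t) ->
  is_derive u t du -> is_derive v t dv ->
  is_derive (fun s => F (u s) (v s)) t (dFx (u t) (v t) * du + dFy * dv).
Proof.
  intros Hx Hy Hc Hu Hv.
  assert (Hdiff : differentiable_pt_lim F (u t) (v t) (dFx (u t) (v t)) dFy).
  { apply filterdiff_differentiable_pt_lim.
    eapply filterdiff_ext_lin; [exact (is_derive_filterdiff F _ _ dFx dFy Hx Hy Hc)|].
    intros [a b]. unfold plus, scal; cbn. unfold mult; cbn. ring. }
  apply is_derive_Reals, derivable_pt_lim_comp_2d; [exact Hdiff|..];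
    apply is_derive_Reals; assumption.
Qed.

Lemma is_derive_partials_comp (D : R -> R -> Prop) (psi pt px pxx : R -> R -> C)
  (u v : R -> R) t du dv :
  open (fun p : R * R => D (fst p) (snd p)) ->
  has_partials D psi pt px pxx -> jcont_on D px ->
  D (u t) (v t) -> is_derive u t du -> is_derive v t dv ->
  is_derive (fun s => psi (u s) (v s)) t
    (RtoC du * px (u t) (v t) + RtoC dv * pt (u t) (v t))%C.
Proof.
  intros HD Hp Hc HDt Hu Hv.
  assert (Hloc : locally (u t, v t) (fun p : R * R => D (fst p) (snd p))) by now apply HD.
  destruct (Hp _ _ HDt) as [Hpt [Hpx _]].
  assert (Hxloc : locally (u t, v t) (fun p : R * R =>
            is_derive (fun z => psi z (snd p)) (fst p) (px (fst p) (snd p))))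
    by (eapply filter_imp; [|exact Hloc]; intros p Hp'; apply (Hp _ _ Hp')).
  apply is_derive_Cparts; eapply is_derive_val.
  - apply (is_derive_comp_2d (fun a b => fst (psi a b)) (fun a b => fst (px a b))
             (fst (pt (u t) (v t))) u v t du dv); auto.
    + eapply filter_imp; [|exact Hxloc]. intros p. apply is_derive_Cfst.
    + exact (is_derive_Cfst _ _ _ Hpt).
    + apply (continuous_comp (fun p : R * R => px (fst p) (snd p)) fst); [now apply Hc|].
      apply continuous_fst.
  - cbn. ring.
  - apply (is_derive_comp_2d (fun a b => snd (psi a b)) (fun a b => snd (px a b))
             (snd (pt (u t) (v t))) u v t du dv); auto.
    + eapply filter_imp; [|exact Hxloc]. intros p. apply is_derive_Csnd.
    + exact (is_derive_Csnd _ _ _ Hpt).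
    + apply (continuous_comp (fun p : R * R => px (fst p) (snd p)) snd); [now apply Hc|].
      apply continuous_snd.
  - cbn. ring.
Qed.

Lemma gauge_nls_identity (rho theta_x theta_xx X_x f g beta V eps n : R) (e w wx wt wxx : C) :
  rho <> 0 -> g * rho ^ 2 = eps * f * X_x ^ 2 ->
  (Ci * wt + wxx + RtoC eps * RtoC n * w = 0)%C ->
  (Ci * ((RtoC (- rho * (f * theta_xx + beta)) * e
          + RtoC rho * (e * (Ci * RtoC (- f * theta_x ^ 2 + V)))) * w
         + RtoC rho * e * (RtoC (-2 * f * theta_x * X_x) * wx + RtoC (f * X_x ^ 2) * wt))
   + RtoC f * (RtoC rho * e * (Ci * RtoC theta_x * (Ci * RtoC theta_x * w + RtoC X_x * wx)
        + (Ci * RtoC theta_xx * w + Ci * RtoC theta_x * (RtoC X_x * wx)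
           + RtoC X_x * (RtoC X_x * wxx))))
   + RtoC g * RtoC (rho ^ 2 * n) * (RtoC rho * e * w)
   + ((V, beta) : C) * (RtoC rho * e * w) = 0)%C.
Proof.
  intros Hrho Hg Hnls.
  assert (Hg' : g = eps * f * X_x ^ 2 / rho ^ 2) by (rewrite <- Hg; field; auto).
  destruct e as [c s], w as [p1 p2], wx as [q1 q2], wt as [t1 t2], wxx as [r1 r2].
  apply (f_equal fst) in Hnls as Hnls1. apply (f_equal snd) in Hnls as Hnls2.
  cbn in Hnls1, Hnls2.
  replace t1 with (- (r2 + eps * n * p2)) by lra.
  replace t2 with (r1 + eps * n * p1) by lra.
  subst g. apply injective_projections; cbn; field; auto.
Qed.

Lemma Cmod_cexpi th : Cmod (cexpi th) = 1.
Proof.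
  unfold cexpi, Cmod. rewrite <- sqrt_1, <- (sin2_cos2 th). f_equal. cbn. unfold Rsqr. ring.
Qed.

Section GaugeTransform.

Variables (D : R -> R -> Prop) (psit pt px pxx : R -> R -> C).
Hypotheses (HDopen : open (fun p : R * R => D (fst p) (snd p)))
  (Hpart : has_partials D psit pt px pxx) (Hpx : jcont_on D px).

Variables (Dt : R -> Prop) (rho tau : R -> R) (theta X theta_x : R -> R -> R)
  (theta_xx X_x : R -> R).
Hypotheses (HD : forall x t, Dt t -> D (X x t) (tau t))
  (Htheta_x : forall x t, is_derive (fun y => theta y t) x (theta_x x t))
  (Htheta_xx : forall x t, is_derive (fun y => theta_x y t) x (theta_xx t))
  (HX_x : forall x t, is_derive (fun y => X y t) x (X_x t)).

Definition gauge x t := (RtoC (rho t) * cexpi (theta x t) * psit (X x t) (tau t))%C.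

Definition gauge_x x t :=
  (RtoC (rho t) * cexpi (theta x t)
   * (Ci * RtoC (theta_x x t) * psit (X x t) (tau t) + RtoC (X_x t) * px (X x t) (tau t)))%C.

Definition gauge_xx x t :=
  (RtoC (rho t) * cexpi (theta x t)
   * (Ci * RtoC (theta_x x t)
        * (Ci * RtoC (theta_x x t) * psit (X x t) (tau t) + RtoC (X_x t) * px (X x t) (tau t))
      + (Ci * RtoC (theta_xx t) * psit (X x t) (tau t)
         + Ci * RtoC (theta_x x t) * (RtoC (X_x t) * px (X x t) (tau t))
         + RtoC (X_x t) * (RtoC (X_x t) * pxx (X x t) (tau t)))))%C.

Definition gauge_t (rho_t tau_t : R -> R) (theta_t X_t : R -> R -> R) x t :=
  ((RtoC (rho_t t) * cexpi (theta x t)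
    + RtoC (rho t) * (cexpi (theta x t) * (Ci * RtoC (theta_t x t)))) * psit (X x t) (tau t)
   + RtoC (rho t) * cexpi (theta x t)
     * (RtoC (X_t x t) * px (X x t) (tau t) + RtoC (tau_t t) * pt (X x t) (tau t)))%C.

Lemma gauge_has_partials (rho_t tau_t : R -> R) (theta_t X_t : R -> R -> R) :
  (forall t, Dt t -> is_derive rho t (rho_t t)) ->
  (forall t, Dt t -> is_derive tau t (tau_t t)) ->
  (forall x t, Dt t -> is_derive (fun s => theta x s) t (theta_t x t)) ->
  (forall x t, Dt t -> is_derive (fun s => X x s) t (X_t x t)) ->
  has_partials (fun _ t => Dt t) gauge (gauge_t rho_t tau_t theta_t X_t) gauge_x gauge_xx.
Proof.
  intros Hrho Htau Htheta_t HX_t x t Ht.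
  assert (Hcoef : forall y, is_derive (fun z => (RtoC (rho t) * cexpi (theta z t))%C) y
                    (RtoC (rho t) * cexpi (theta y t) * (Ci * RtoC (theta_x y t)))%C).
  { intros y. eapply is_derive_val.
    - exact (is_derive_Cmult _ _ _ _ _ (is_derive_RtoC _ _ _ (is_derive_const _ y))
               (is_derive_cexpi _ _ _ (Htheta_x y t))).
    - apply injective_projections; cbn; ring. }
  destruct (Hpart _ _ (HD x t Ht)) as (_ & Hpx_x & Hpxx_x).
  split; [|split]; (eapply is_derive_val; [apply is_derive_Cmult|]).
  - apply is_derive_Cmult; [exact (is_derive_RtoC _ _ _ (Hrho t Ht))|].
    exact (is_derive_cexpi _ _ _ (Htheta_t x t Ht)).
  - apply (is_derive_partials_comp D psit pt px pxx); auto.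
  - unfold gauge_t. apply injective_projections; cbn; ring.
  - apply Hcoef.
  - exact (is_derive_comp_RC (fun z => psit z (tau t)) _ _ _ _ Hpx_x (HX_x x t)).
  - unfold gauge_x. apply injective_projections; cbn; ring.
  - apply Hcoef.
  - apply is_derive_Cplus.
    + apply is_derive_Cmult;
        [|exact (is_derive_comp_RC (fun z => psit z (tau t)) _ _ _ _ Hpx_x (HX_x x t))].
      exact (is_derive_Cmult _ _ _ _ _ (is_derive_const (K := R_AbsRing) Ci x)
               (is_derive_RtoC _ _ _ (Htheta_xx x t))).
    + exact (is_derive_Cmult _ _ _ _ _ (is_derive_RtoC _ _ _ (is_derive_const _ x))
               (is_derive_comp_RC (fun z => px z (tau t)) _ _ _ _ Hpxx_x (HX_x x t))).
  - unfold gauge_xx. apply injective_projections; cbn; ring.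
Qed.

Variables (f g beta : R -> R) (V : R -> R -> R) (eps : R).
Hypotheses
  (Hnls : forall x t, D x t ->
     (Ci * pt x t + pxx x t + RtoC eps * RtoC (Cmod (psit x t) ^ 2) * psit x t = 0)%C)
  (Hrho0 : forall t, Dt t -> rho t <> 0)
  (Hnonlin : forall t, Dt t -> g t * rho t ^ 2 = eps * f t * X_x t ^ 2)
  (Hrho_t : forall t, Dt t -> is_derive rho t (- rho t * (f t * theta_xx t + beta t)))
  (Htau_t : forall t, Dt t -> is_derive tau t (f t * X_x t ^ 2))
  (Htheta_t : forall x t, Dt t ->
     is_derive (fun s => theta x s) t (- f t * theta_x x t ^ 2 + V x t))
  (HX_t : forall x t, Dt t ->
     is_derive (fun s => X x s) t (-2 * f t * theta_x x t * X_x t)).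

Theorem gauge_solves :
  exists pt' px' pxx' : R -> R -> C,
    has_partials (fun _ t => Dt t) gauge pt' px' pxx' /\
    (forall x t, Dt t ->
       (Ci * pt' x t + RtoC (f t) * pxx' x t
        + RtoC (g t) * RtoC (Cmod (gauge x t) ^ 2) * gauge x t
        + ((V x t, beta t) : C) * gauge x t = 0)%C).
Proof.
  eexists; exists gauge_x, gauge_xx. split.
  - exact (gauge_has_partials _ _ _ _ Hrho_t Htau_t Htheta_t HX_t).
  - intros x t Ht. unfold gauge_t, gauge_x, gauge_xx, gauge.
    rewrite !Cmod_mult, Cmod_cexpi, Cmod_R, Rmult_1_r, Rpow_mult_distr, pow2_abs.
    apply gauge_nls_identity with (eps := eps); auto.
Qed.
End GaugeTransform.

Lemma is_derive_ln_abs (f : R -> R) t :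
  f t <> 0 -> ex_derive f t ->
  is_derive (fun s => ln (Rabs (f s))) t (Derive f t / f t).
Proof.
  intros Hf0 Hf1.
  eapply is_derive_val.
  - apply (is_derive_comp ln (fun s => Rabs (f s))).
    + apply is_derive_ln, Rabs_pos_lt, Hf0.
    + apply is_derive_Rabs; [apply Derive_correct|]; auto.
  - unfold scal; cbn; unfold mult; cbn.
    destruct (Rdichotomy _ _ Hf0) as [Hn | Hp].
    + rewrite (sign_eq_m1 _ Hn), Rabs_left by exact Hn. field; auto.
    + rewrite (sign_eq_1 _ Hp), Rabs_right by lra. field; auto.
Qed.

Lemma Derive_ln_abs (f : R -> R) t :
  f t <> 0 -> ex_derive f t ->
  Derive (fun s => ln (Rabs (f s))) t = Derive f t / f t.
Proof. intros; now apply is_derive_unique, is_derive_ln_abs. Qed.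

Lemma Derive_n_ln_abs_2 (f : R -> R) t :
  locally t (fun s => f s <> 0 /\ ex_derive f s) -> ex_derive (Derive f) t ->
  Derive_n (fun s => ln (Rabs (f s))) 2 t
  = (Derive (Derive f) t * f t - Derive f t ^ 2) / f t ^ 2.
Proof.
  intros Hloc Hf2.
  destruct (locally_singleton _ _ Hloc) as [Hf0 Hf1].
  cbn. rewrite (Derive_ext_loc _ (fun s => Derive f s / f s)).
  - apply is_derive_unique. auto_derive; [auto|].
    change (fun s => f s) with f; change (fun s => Derive f s) with (Derive f).
    field; auto.
  - eapply filter_imp; [|exact Hloc]. intros s [Hs0 Hs1]. now apply Derive_ln_abs.
Qed.

Lemma Derive_n_inv_2 (g : R -> R) t :
  locally t (fun s => g s <> 0 /\ ex_derive g s) -> ex_derive (Derive g) t ->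
  Derive_n (fun s => / g s) 2 t
  = - Derive (Derive g) t / g t ^ 2 + 2 * Derive g t ^ 2 / g t ^ 3.
Proof.
  intros Hloc Hg2.
  destruct (locally_singleton _ _ Hloc) as [Hg0 Hg1].
  cbn. rewrite (Derive_ext_loc _ (fun s => - Derive g s / g s ^ 2)).
  - apply is_derive_unique. auto_derive; [repeat split; auto; exact (pow_nonzero _ 2 Hg0)|].
    change (fun s => g s) with g; change (fun s => Derive g s) with (Derive g).
    field; auto.
  - eapply filter_imp; [|exact Hloc]. intros s [Hs0 Hs1].
    apply is_derive_unique. auto_derive; [auto|].
    change (fun s => g s) with g. field; auto.
Qed.

Lemma exp_opp_double x : exp (-2 * x) = exp (- x) ^ 2.
Proof. cbn. rewrite Rmult_1_r, <- exp_plus. f_equal. ring. Qed.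

(* Twice the x^2-coefficient of trTheta, in a shape for which [ring] computes
   the x-derivatives. *)
Definition trTheta_xx (f g beta : R -> R) (t : R) : R :=
  2 * (/ (4 * f t) * (2 * beta t + Derive f t / f t - Derive g t / g t)).

Definition trTheta_x (eps1 T1 xi0 : R) (f g beta B II : R -> R) (x t : R) : R :=
  trTheta_xx f g beta t * x + g t / f t * exp (- B t) * (II t - eps1 * xi0 * sqrt T1 / 2).

Definition trX_x (eps1 T1 : R) (f g B : R -> R) (t : R) : R :=
  eps1 * sqrt T1 * (g t / f t) * exp (- B t).

Lemma is_derive_trTheta_x (eps1 T1 xi0 theta0 : R) (f g beta B II J L M P : R -> R) x t :
  is_derive (fun y => trTheta eps1 T1 xi0 theta0 f g beta B II J L M P y t) x
    (trTheta_x eps1 T1 xi0 f g beta B II x t).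
Proof. unfold trTheta, trTheta_x, trTheta_xx. auto_derive; auto. ring. Qed.

Lemma is_derive_trTheta_xx (eps1 T1 xi0 : R) (f g beta B II : R -> R) x t :
  is_derive (fun y => trTheta_x eps1 T1 xi0 f g beta B II y t) x (trTheta_xx f g beta t).
Proof. unfold trTheta_x. auto_derive; auto. ring. Qed.

Lemma is_derive_trX_x (eps1 T1 xi0 xi1 : R) (f g B J P : R -> R) x t :
  is_derive (fun y => trX eps1 T1 xi0 xi1 f g B J P y t) x (trX_x eps1 T1 f g B t).
Proof. unfold trX, trX_x. auto_derive; auto. ring. Qed.

Lemma trR_pos (eps T1 : R) (f g B : R -> R) t :
  T1 > 0 -> eps * (g t / f t) > 0 -> 0 < trR eps T1 f g B t.
Proof.
  intros HT1 Hs. unfold trR.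
  apply Rmult_lt_0_compat; [apply exp_pos|]. apply sqrt_lt_R0.
  replace (eps * T1 * (g t / f t)) with (T1 * (eps * (g t / f t))) by ring.
  apply Rmult_lt_0_compat; lra.
Qed.

Lemma trR_sqr (eps eps1 T1 : R) (f g B : R -> R) t :
  eps1 = 1 \/ eps1 = -1 -> T1 > 0 -> f t <> 0 -> eps * (g t / f t) > 0 ->
  g t * trR eps T1 f g B t ^ 2 = eps * f t * trX_x eps1 T1 f g B t ^ 2.
Proof.
  intros He1 HT1 Hf0 Hs. unfold trR, trX_x.
  assert (HS : 0 <= eps * T1 * (g t / f t)) by nra.
  rewrite !Rpow_mult_distr, !pow2_sqrt by lra.
  destruct He1; subst eps1; field; auto.
Qed.

Lemma is_derive_trR_t (eps T1 : R) (f g beta B : R -> R) t :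
  T1 > 0 -> eps * (g t / f t) > 0 -> f t <> 0 -> g t <> 0 ->
  ex_derive f t -> ex_derive g t -> is_derive B t (2 * beta t) ->
  is_derive (trR eps T1 f g B) t
    (- trR eps T1 f g B t * (f t * trTheta_xx f g beta t + beta t)).
Proof.
  intros HT1 Hs Hf0 Hg0 Hf1 Hg1 HB.
  assert (HS : 0 < eps * T1 * (g t / f t)) by nra.
  assert (Heps0 : eps <> 0) by (intros ->; lra).
  unfold trR, trTheta_xx.
  auto_derive; [repeat split; auto; eexists; eauto|].
  rewrite (is_derive_unique (fun s : R => B s) _ _ HB).
  change (fun s : R => f s) with f; change (fun s : R => g s) with g.
  assert (Hq : sqrt (eps * T1 * (g t / f t)) * sqrt (eps * T1 * (g t / f t))
               = eps * T1 * (g t / f t)) by (apply sqrt_sqrt; lra).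
  assert (Hq0 : sqrt (eps * T1 * (g t / f t)) <> 0) by (apply Rgt_not_eq, sqrt_lt_R0, HS).
  change (g t * / f t) with (g t / f t).
  generalize (sqrt (eps * T1 * (g t / f t))) Hq Hq0; intros q Hq' Hq0'.
  (* Eliminate T1 in favour of q, whose square is eps T1 g / f. *)
  assert (HT : T1 = q * q * f t / (g t * eps)) by (rewrite Hq'; field; auto).
  subst T1. field; auto.
Qed.

Lemma is_derive_trT_t (eps1 T1 T2 : R) (f g B P : R -> R) t :
  eps1 = 1 \/ eps1 = -1 -> T1 > 0 -> f t <> 0 ->
  is_derive P t (g t ^ 2 / f t * exp (-2 * B t)) ->
  is_derive (trT T1 T2 P) t (f t * trX_x eps1 T1 f g B t ^ 2).
Proof.
  intros He1 HT1 Hf0 HP. unfold trT, trX_x.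
  auto_derive; [eexists; eauto|].
  rewrite (is_derive_unique (fun s : R => P s) _ _ HP), exp_opp_double.
  rewrite !Rpow_mult_distr, pow2_sqrt by lra.
  destruct He1; subst eps1; field; auto.
Qed.

Lemma is_derive_trX_t (eps1 T1 xi0 xi1 : R) (f g beta B P II J : R -> R) x t :
  eps1 = 1 \/ eps1 = -1 -> T1 > 0 -> f t <> 0 -> g t <> 0 ->
  ex_derive f t -> ex_derive g t ->
  is_derive B t (2 * beta t) ->
  is_derive P t (g t ^ 2 / f t * exp (-2 * B t)) ->
  is_derive J t (g t ^ 2 / f t * exp (-2 * B t) * II t) ->
  is_derive (fun s => trX eps1 T1 xi0 xi1 f g B J P x s) t
    (-2 * f t * trTheta_x eps1 T1 xi0 f g beta B II x t * trX_x eps1 T1 f g B t).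
Proof.
  intros He1 HT1 Hf0 Hg0 Hf1 Hg1 HB HP HJ.
  unfold trX, trTheta_x, trTheta_xx, trX_x.
  auto_derive; [repeat split; auto; eexists; eauto|].
  rewrite (is_derive_unique (fun s : R => B s) _ _ HB),
    (is_derive_unique (fun s : R => P s) _ _ HP),
    (is_derive_unique (fun s : R => J s) _ _ HJ), exp_opp_double.
  change (fun s : R => f s) with f; change (fun s : R => g s) with g.
  (* [field] cannot use [sqrt T1 ^ 2 = T1], so write T1 as the square of q := sqrt T1. *)
  assert (Hq : sqrt T1 * sqrt T1 = T1) by (apply sqrt_sqrt; lra).
  generalize (sqrt T1) Hq; intros q <-.
  destruct He1; subst eps1; field; auto.
Qed.

Lemma is_derive_trTheta_t (eps1 T1 xi0 theta0 : R) (f g beta H1 H2 B P II J L M : R -> R) x t :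
  eps1 = 1 \/ eps1 = -1 -> T1 > 0 ->
  locally t (fun s => f s <> 0 /\ ex_derive f s) ->
  locally t (fun s => g s <> 0 /\ ex_derive g s) ->
  ex_derive (Derive f) t -> ex_derive (Derive g) t -> ex_derive beta t ->
  is_derive B t (2 * beta t) ->
  is_derive P t (g t ^ 2 / f t * exp (-2 * B t)) ->
  is_derive II t (f t / g t * exp (B t) * H1 t) ->
  is_derive J t (g t ^ 2 / f t * exp (-2 * B t) * II t) ->
  is_derive L t (g t ^ 2 / f t * exp (-2 * B t) * II t ^ 2) ->
  is_derive M t (H2 t) ->
  is_derive (fun s => trTheta eps1 T1 xi0 theta0 f g beta B II J L M P x s) t
    (- f t * trTheta_x eps1 T1 xi0 f g beta B II x t ^ 2
     + (coef_a f g beta t * x ^ 2 + H1 t * x + H2 t)).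
Proof.
  intros He1 HT1 Hf Hg Hf2 Hg2 Hb HB HP HII HJ HL HM.
  destruct (locally_singleton _ _ Hf) as [Hf0 Hf1].
  destruct (locally_singleton _ _ Hg) as [Hg0 Hg1].
  unfold coef_a.
  rewrite Derive_n_ln_abs_2, !Derive_ln_abs, Derive_n_inv_2 by auto.
  unfold trTheta, trTheta_x, trTheta_xx.
  auto_derive; [repeat split; auto; eexists; eauto|].
  rewrite (is_derive_unique (fun s : R => B s) _ _ HB),
    (is_derive_unique (fun s : R => P s) _ _ HP),
    (is_derive_unique (fun s : R => II s) _ _ HII),
    (is_derive_unique (fun s : R => J s) _ _ HJ),
    (is_derive_unique (fun s : R => L s) _ _ HL),
    (is_derive_unique (fun s : R => M s) _ _ HM), exp_opp_double.
  change (fun s : R => f s) with f; change (fun s : R => g s) with g;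
    change (fun s : R => beta s) with beta;
    change (fun s : R => Derive f s) with (Derive f);
    change (fun s : R => Derive g s) with (Derive g).
  assert (HE : exp (- B t) <> 0) by apply Rgt_not_eq, exp_pos.
  replace (exp (B t)) with (/ exp (- B t)) by (rewrite exp_Ropp; apply Rinv_inv).
  assert (Hq : sqrt T1 * sqrt T1 = T1) by (apply sqrt_sqrt; lra).
  generalize (sqrt T1) Hq; intros q <-.
  destruct He1; subst eps1; field; auto.
Qed.

Lemma locally_in_interval lo hi t :
  in_interval lo hi t -> locally t (in_interval lo hi).
Proof.
  intros Ht. apply (open_and _ _ (open_Rbar_gt lo) (open_Rbar_lt hi)), Ht.
Qed.

Lemma C2_on_locally_nonzero lo hi (f : R -> R) t :
  C2_on lo hi f -> (forall s, in_interval lo hi s -> f s <> 0) -> in_interval lo hi t ->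
  locally t (fun s => f s <> 0 /\ ex_derive f s).
Proof.
  intros Hf Hf0 Ht.
  eapply filter_imp; [|exact (locally_in_interval _ _ _ Ht)].
  intros s Hs. split; [now apply Hf0 | now apply Hf].
Qed.

Theorem mainTheorem2
  (lo hi : Rbar) (f g beta H1 H2 : R -> R)
  (Hf : C2_on lo hi f) (Hg : C2_on lo hi g)
  (Hf0 : forall t, in_interval lo hi t -> f t <> 0)
  (Hg0 : forall t, in_interval lo hi t -> g t <> 0)
  (Hbeta : C1_on lo hi beta) (HH1 : C0_on lo hi H1) (HH2 : C0_on lo hi H2)
  (eps eps1 : R) (Heps : eps = 1 \/ eps = -1) (Heps1 : eps1 = 1 \/ eps1 = -1)
  (Hsign : forall t, in_interval lo hi t -> eps * (g t / f t) > 0)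
  (T1 T2 xi0 xi1 theta0 : R) (HT1 : T1 > 0)
  (B P II J L M : R -> R)
  (HB : forall t, in_interval lo hi t -> is_derive B t (2 * beta t))
  (HP : forall t, in_interval lo hi t ->
          is_derive P t (g t ^ 2 / f t * exp (-2 * B t)))
  (HII : forall t, in_interval lo hi t ->
          is_derive II t (f t / g t * exp (B t) * H1 t))
  (HJ : forall t, in_interval lo hi t ->
          is_derive J t (g t ^ 2 / f t * exp (-2 * B t) * II t))
  (HL : forall t, in_interval lo hi t ->
          is_derive L t (g t ^ 2 / f t * exp (-2 * B t) * II t ^ 2))
  (HM : forall t, in_interval lo hi t -> is_derive M t (H2 t))
  (D : R -> R -> Prop) (HDopen : open (fun p : R * R => D (fst p) (snd p)))
  (HDcont : forall x t, in_interval lo hi t ->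
     D (trX eps1 T1 xi0 xi1 f g B J P x t) (trT T1 T2 P t))
  (psit : R -> R -> C)
  (Hpsit : exists pt px pxx : R -> R -> C,
     has_partials D psit pt px pxx /\
     jcont_on D psit /\ jcont_on D pt /\ jcont_on D px /\ jcont_on D pxx /\
     (forall x t, D x t ->
        (Ci * pt x t + pxx x t
         + RtoC eps * RtoC (Cmod (psit x t) ^ 2) * psit x t = 0)%C)) :
  let psi := fun x t =>
    (RtoC (trR eps T1 f g B t)
     * cexpi (trTheta eps1 T1 xi0 theta0 f g beta B II J L M P x t)
     * psit (trX eps1 T1 xi0 xi1 f g B J P x t) (trT T1 T2 P t))%C in
  exists pt px pxx : R -> R -> C,
    has_partials (fun _ t => in_interval lo hi t) psi pt px pxx /\
    (forall x t, in_interval lo hi t ->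
       (Ci * pt x t + RtoC (f t) * pxx x t
        + RtoC (g t) * RtoC (Cmod (psi x t) ^ 2) * psi x t
        + coef_h f g beta H1 H2 x t * psi x t = 0)%C).
Proof.
  intros psi.
  destruct Hpsit as (pt & px & pxx & Hpart & _ & _ & Hpx & _ & Hnls).
  unfold coef_h.
  apply gauge_solves with (D := D) (pt := pt) (px := px) (pxx := pxx) (eps := eps)
    (theta_x := trTheta_x eps1 T1 xi0 f g beta B II) (theta_xx := trTheta_xx f g beta)
    (X_x := trX_x eps1 T1 f g B)
    (V := fun x t => coef_a f g beta t * x ^ 2 + H1 t * x + H2 t);
    auto using is_derive_trTheta_x, is_derive_trTheta_xx, is_derive_trX_x.
  - intros t Ht. apply Rgt_not_eq, trR_pos; auto.
  - intros t Ht. apply trR_sqr; auto.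
  - intros t Ht. destruct (Hf t Ht) as (? & _), (Hg t Ht) as (? & _).
    apply is_derive_trR_t; auto.
  - intros t Ht. apply is_derive_trT_t; auto.
  - intros x t Ht.
    pose proof (C2_on_locally_nonzero _ _ _ _ Hf Hf0 Ht).
    pose proof (C2_on_locally_nonzero _ _ _ _ Hg Hg0 Ht).
    destruct (Hf t Ht) as (_ & ? & _), (Hg t Ht) as (_ & ? & _), (Hbeta t Ht) as (? & _).
    apply is_derive_trTheta_t; auto.
  - intros x t Ht. destruct (Hf t Ht) as (? & _), (Hg t Ht) as (? & _).
    apply is_derive_trX_t; auto.
Qed.
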